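(* Let $d\ge 2$, let $V$ be a finite subset of the unit sphere $S^{d-1}\subset\mathbb{R}^d$ with $|V|\ge 2$, and let $d_{\min}(V)=\min\{\|v-v'\| : v,v'\in V,\ v\neq v'\}$. Let $T$ be a random orthogonal matrix uniformly distributed on the orthogonal group $O(d)$ (i.e. distributed according to its normalized Haar probability measure), and for a region $\mathcal{A}\subseteq S^{d-1}$ define the random variable $$g^V_{\mathcal{A}}(T)=\frac{1}{|V|}\sum_{v\in V} I_{\mathcal{A}}(Tv).$$ Let $\mathcal{A}$ be a region of $S^{d-1}$ which can be written as a disjoint union of subregions $\mathcal{A}_1,\dots,\mathcal{A}_N$ such that $\operatorname{Diam}(\mathcal{A}_i)<d_{\min}(V)$ for all $i=1,\dots,N$. Then $$\operatorname{Var}\big(g^V_{\mathcal{A}}(T)\big)\le \pi(\mathcal{A})-\pi^2(\mathcal{A})+\Big(\frac{N}{|V|}-1\Big)\pi(\mathcal{A}).$$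
   Context: $\|\cdot\|$ is the Euclidean norm on $\mathbb{R}^d$. For a region $\mathcal{B}\subseteq S^{d-1}$, $\operatorname{Diam}(\mathcal{B})=\sup\{\|x-x'\| : x,x'\in\mathcal{B}\}$. $\pi$ denotes the normalized surface (uniform) probability measure on $S^{d-1}$, so $\pi(S^{d-1})=1$; regions are measurable subsets of $S^{d-1}$. $I_{\mathcal{A}}$ is the indicator function of $\mathcal{A}$. *)

From HB Require Import structures.
From mathcomp Require Import all_boot all_order all_algebra.
From mathcomp Require Import all_classical all_reals all_analysis.
Set Implicit Arguments. Unset Strict Implicit. Unset Printing Implicit Defensive.
Import Order.TTheory GRing.Theory Num.Theory.
Import numFieldNormedType.Exports.
Local Open Scope classical_set_scope.
Local Open Scope ring_scope.

Section defs.
Variables (R : realType) (d : nat).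

Definition enorm (v : 'cV[R]_d) : R := Num.sqrt (\sum_(i < d) (v i 0) ^+ 2).

Definition sphere : set 'cV[R]_d := [set v | enorm v = 1].

Definition Diam (B : set 'cV[R]_d) : R :=
  sup [set r | exists x y, B x /\ B y /\ r = enorm (x - y)].

(* minimal distance of a finite point set V (given as a duplicate-free list) *)
Definition dmin (V : seq 'cV[R]_d) : R :=
  inf [set r | exists v w, v \in V /\ w \in V /\ v != w /\ r = enorm (v - w)].

Definition orthogonal_mx (M : 'M[R]_d) : Prop := M^T *m M = 1%:M.

Definition MxBorel := g_sigma_algebraType (@open 'M[R]_d).
Definition VecBorel := g_sigma_algebraType (@open 'cV[R]_d).

(* P is the normalized Haar probability measure on O(d): a probability
   measure on d x d matrices concentrated on O(d) and invariant under
   left multiplication by orthogonal matrices. *)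
Definition is_Haar_On (P : probability MxBorel R) : Prop :=
  P [set M : MxBorel | orthogonal_mx M] = 1%E /\
  forall (U : 'M[R]_d), orthogonal_mx U ->
  forall B : set MxBorel, measurable B ->
    P ((fun M : MxBorel => (U *m M : MxBorel)) @^-1` B) = P B.

(* pi is the normalized surface (uniform) probability measure on S^{d-1}:
   a probability measure concentrated on the sphere, invariant under O(d). *)
Definition is_uniform_sphere (pi : probability VecBorel R) : Prop :=
  pi (sphere : set VecBorel) = 1%E /\
  forall (U : 'M[R]_d), orthogonal_mx U ->
  forall B : set VecBorel, measurable B ->
    pi ((fun v : VecBorel => (U *m v : VecBorel)) @^-1` B) = pi B.

Definition gVA (V : seq 'cV[R]_d) (A : set 'cV[R]_d) (T : MxBorel) : R :=
  (size V)%:R^-1 * \sum_(v <- V) \1_A (T *m v).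

End defs.

From HB Require Import structures.
From mathcomp Require Import all_boot all_order all_algebra.
From mathcomp Require Import all_classical all_reals all_analysis.
From mathcomp Require Import measurable_realfun.
From mathcomp Require Import ring lra.
Import Order.TTheory GRing.Theory Num.Theory.
Import numFieldNormedType.Exports.
Local Open Scope classical_set_scope.
Local Open Scope ring_scope.

(* First, [E g = pi(A)]: Haar measure is also invariant under
   [T |-> T^T] (Fubini on [(S, T) |-> S^T T]), hence right invariant, and O(d) acts
   transitively on the sphere; so [P(T v \in A)] does not depend on [v], and Fubini
   on [(T, x) |-> T x] against the rotation-invariant [pi] identifies it with
   [pi(A)].  Second, an orthogonal [T] preserves distances, so a region of diameter
   below [dmin V] contains at most one point [T v]; hence at most [N] of them lie in
   [A], [g <= N/|V|] and [g^2 <= (N/|V|) g].  Taking expectations,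
   [Var g = E g^2 - (E g)^2 <= (N/|V|) pi(A) - pi(A)^2]. *)

Set Implicit Arguments. Unset Strict Implicit. Unset Printing Implicit Defensive.

Section matrix_borel.
Variable R : realType.
Local Notation MB m n := (g_sigma_algebraType (@open 'M[R]_(m, n))).

Lemma measurable_mx_coord m n (i : 'I_m) (j : 'I_n) :
  measurable_fun setT (fun M : MB m n => M i j).
Proof.
apply: (measurability _ (RGenOInfty.measurableE R)) => /= _ [_ [a ->] <-].
rewrite setTI; apply: sub_sigma_algebra.
apply: open_comp; first by move=> M _; exact: coord_continuous.
by apply: itv_open_ends_open; rewrite /itv_open_ends.
Qed.

Lemma ball_mxP m n (M N : 'M[R]_(m, n)) e : 0 < e ->
  ball M e N <-> forall i j, `|M i j - N i j| < e.
Proof.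
move=> e0; rewrite -ball_normE /ball_ /= [X in X < _]/Num.Def.normr /= mx_normrE.
split => [/bigmax_ltP[_ h] i j|h].
  by have := h (i, j) erefl; rewrite !mxE.
by apply/bigmax_ltP; split => // -[i j] _ /=; rewrite !mxE; exact: h.
Qed.

Definition rat_box m n (q : 'M[rat]_(m, n)) (r : nat) : set 'M[R]_(m, n) :=
  [set M | forall i j, `|M i j - ratr (q i j)| < r.+1%:R^-1].

Lemma open_rat_box_cover m n (G : set 'M[R]_(m, n)) (M : 'M[R]_(m, n)) :
  open G -> G M -> exists q r, rat_box q r M /\ rat_box q r `<=` G.
Proof.
move=> oG GM; have /nbhs_ballP[e e0 eG] : nbhs M G by move: oG; rewrite openE; apply.
set r := Num.truncn (2 / e).
have re : r.+1%:R^-1 < e / 2.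
  by rewrite -[e / 2]invf_div ltf_pV2 ?posrE ?divr_gt0 //; exact: truncnS_gt.
have /choice[f hf] : forall ij : 'I_m * 'I_n,
    exists q : rat, `|M ij.1 ij.2 - ratr q| < r.+1%:R^-1.
  move=> ij; have : M ij.1 ij.2 - r.+1%:R^-1 < M ij.1 ij.2 + r.+1%:R^-1.
    by rewrite ltrD2l gtrN // invr_gt0.
  by move=> /rat_in_itvoo[q]; rewrite in_itv /= => hq; exists q; rewrite ltr_distlC.
exists (\matrix_(i, j) f (i, j)), r; split => [i j|N hN].
  by rewrite mxE; exact: (hf (i, j)).
apply: eG; apply/ball_mxP => // i j.
have := hN i j; rewrite mxE distrC => hNq.
rewrite (le_lt_trans (ler_distD (ratr (f (i, j))) _ _)) //.
by rewrite (lt_trans (ltrD (hf (i, j)) hNq)) // [e]splitr ltrD.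
Qed.

(* The rational boxes form a countable base of the topology, so every open set
   is a countable union of boxes, which are cut out by coordinate inequalities. *)
Lemma measurable_fun_mx d' (T : measurableType d') m n (F : T -> MB m n) :
  (forall i j, measurable_fun setT (fun t => F t i j)) -> measurable_fun setT F.
Proof.
move=> mF; apply: (@measurability _ _ _ _ setT F (@open 'M[R]_(m, n))) => //.
move=> _ [G oG <-].
pose B k : set 'M[R]_(m, n) :=
  if unpickle k is Some (q, r) then
    if pselect (rat_box q r `<=` G) then rat_box q r else set0
  else set0.
have -> : G = \bigcup_k B k.
  apply/seteqP; split => [M GM|M [k _]]; rewrite /B.
    have [q [r [qrM qrG]]] := open_rat_box_cover oG GM.
    by exists (pickle (q, r)) => //; rewrite pickleK; case: pselect.
  by move: (unpickle k) => [[q r]|//]; case: pselect => // h /h.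
rewrite preimage_bigcup setI_bigcupr; apply: bigcupT_measurable => k; rewrite /B.
move: (unpickle k) => [[q r]|]; last by rewrite preimage_set0 setI0.
case: pselect => hqr; last by rewrite preimage_set0 setI0.
have -> : setT `&` F @^-1` rat_box q r = \bigcap_(ij in [set: 'I_m * 'I_n])
    [set t | `|F t ij.1 ij.2 - ratr (q ij.1 ij.2)| < r.+1%:R^-1].
  by rewrite setTI; apply/seteqP; split => [t h [i j] _|t h i j]; [exact: h|exact: (h (i, j))].
apply: fin_bigcap_measurable; first exact: finite_finset.
move=> [i j] _ /=.
have mFij : measurable_fun setT (fun t => `|F t i j - ratr (q i j)|).
  apply: measurableT_comp; first exact: normr_measurable.
  by apply: measurable_funB => //; exact: measurable_cst.
rewrite -[X in measurable X]setTI.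
exact: (measurable_fun_ltr mFij (measurable_cst (r.+1%:R^-1 : R)) measurableT
  (Y := [set true]) I).
Qed.

Lemma measurable_mulmx d' (T : measurableType d') a b c
    (F : T -> MB a b) (G : T -> MB b c) :
  measurable_fun setT F -> measurable_fun setT G ->
  measurable_fun setT (fun t => (F t *m G t : MB a c)).
Proof.
move=> mF mG; apply: measurable_fun_mx => i j.
under eq_fun do rewrite mxE.
apply: measurable_sum => k; apply: measurable_funM.
  exact: (measurableT_comp (measurable_mx_coord i k) mF).
exact: (measurableT_comp (measurable_mx_coord k j) mG).
Qed.

Lemma measurable_trmx d' (T : measurableType d') a b (F : T -> MB a b) :
  measurable_fun setT F -> measurable_fun setT (fun t => ((F t)^T : MB b a)).
Proof.
move=> mF; apply: measurable_fun_mx => i j.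
under eq_fun do rewrite mxE.
exact: (measurableT_comp (measurable_mx_coord j i) mF).
Qed.

Lemma measurable_mx_set1 m n (c : 'M[R]_(m, n)) : measurable ([set c] : set (MB m n)).
Proof.
have -> : [set c] = \bigcap_(ij in [set: 'I_m * 'I_n])
    ((fun M : MB m n => M ij.1 ij.2) @^-1` [set c ij.1 ij.2]).
  apply/seteqP; split => [M -> [i j] _ //|M h].
  by apply/matrixP => i j; exact: (h (i, j)).
apply: fin_bigcap_measurable; first exact: finite_finset.
move=> [i j] _; rewrite -[X in measurable X]setTI.
exact: measurable_mx_coord.
Qed.

Lemma measurable_mulmxr m n p (W : 'M[R]_(n, p)) (B : set (MB m p)) :
  measurable B -> measurable [set M : MB m n | B (M *m W)].
Proof.
move=> mB; rewrite -[X in measurable X]setTI.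
exact: (measurable_mulmx (@measurable_id _ (MB m n) setT)
  (measurable_cst (W : MB n p)) measurableT mB).
Qed.

Lemma measurable_trmx_preimage m n (B : set (MB n m)) :
  measurable B -> measurable [set M : MB m n | B M^T].
Proof.
move=> mB; rewrite -[X in measurable X]setTI.
exact: (measurable_trmx (@measurable_id _ (MB m n) setT) measurableT mB).
Qed.

End matrix_borel.

Section euclid.
Variables (R : realType) (d : nat).
Implicit Types (u v w x : 'cV[R]_d) (T : 'M[R]_d).

Definition dotv u w : R := \sum_i u i 0 * w i 0.

Lemma trmx_mulmxE u w : u^T *m w = (dotv u w)%:M.
Proof.
rewrite [LHS]mx11_scalar; congr (_%:M).
by rewrite mxE; apply: eq_bigr => i _; rewrite mxE.
Qed.

Lemma dotvC u w : dotv u w = dotv w u.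
Proof. by apply: eq_bigr => i _; rewrite mulrC. Qed.

Lemma dotvBl u w x : dotv (u - w) x = dotv u x - dotv w x.
Proof. by rewrite /dotv -sumrB; apply: eq_bigr => i _; rewrite !mxE mulrBl. Qed.

Lemma dotvBr u w x : dotv x (u - w) = dotv x u - dotv x w.
Proof. by rewrite dotvC dotvBl !(dotvC x). Qed.

Lemma dotv_ge0 u : 0 <= dotv u u.
Proof. by apply: sumr_ge0 => i _; rewrite -expr2 sqr_ge0. Qed.

Lemma dotv_eq0 u : (dotv u u == 0) = (u == 0).
Proof.
apply/idP/eqP => [|->]; last by rewrite /dotv big1 // => i _; rewrite mxE mul0r.
rewrite psumr_eq0 => [/allP h|i _]; last by rewrite -expr2 sqr_ge0.
apply/matrixP => i j; rewrite (ord1 j) mxE.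
by have /eqP := h i (mem_index_enum _); rewrite -expr2 => /eqP; rewrite sqrf_eq0 => /eqP.
Qed.

Lemma enormE u : enorm u = Num.sqrt (dotv u u).
Proof. by congr Num.sqrt; apply: eq_bigr => i _; rewrite expr2. Qed.

Lemma sphereE u : sphere u <-> dotv u u = 1.
Proof.
rewrite /sphere /= enormE; split => [h|->]; last exact: sqrtr1.
by rewrite -[LHS]sqr_sqrtr ?dotv_ge0 // h expr1n.
Qed.

Lemma enorm_sphereB_le u w : sphere u -> sphere w -> enorm (u - w) <= 2.
Proof.
move=> /sphereE hu /sphereE hw.
have duw : dotv (u - w) (u - w) <= 2 * dotv u u + 2 * dotv w w.
  rewrite /dotv !mulr_sumr -big_split /=; apply: ler_sum => i _.
  by rewrite !mxE; have := sqr_ge0 (u i 0 + w i 0); nra.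
rewrite enormE -[2 in leRHS]ger0_norm // -sqrtr_sqr ler_sqrt ?sqr_ge0 //.
by apply: (le_trans duw); rewrite hu hw; lra.
Qed.

Lemma orthogonal_trmx T : orthogonal_mx T -> orthogonal_mx T^T.
Proof. by rewrite /orthogonal_mx trmxK => /mulmx1C. Qed.

Lemma orthogonal_dotv T u w : orthogonal_mx T -> dotv (T *m u) (T *m w) = dotv u w.
Proof.
move=> oT; have : (T *m u)^T *m (T *m w) = u^T *m w.
  by rewrite trmx_mul -mulmxA (mulmxA T^T) oT mul1mx.
by rewrite !trmx_mulmxE => /matrixP /(_ 0 0); rewrite !mxE /= !mulr1n.
Qed.

Lemma orthogonal_enorm T u : orthogonal_mx T -> enorm (T *m u) = enorm u.
Proof. by move=> oT; rewrite !enormE orthogonal_dotv. Qed.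

(* The Householder reflection in the hyperplane orthogonal to [v - x]. *)
Lemma sphere_orthogonal_transitive x v : sphere x -> sphere v ->
  exists W, orthogonal_mx W /\ W *m v = x.
Proof.
move=> /sphereE hx /sphereE hv.
have [->|xv] := eqVneq x v.
  by exists 1%:M; rewrite /orthogonal_mx trmx1 !mul1mx.
set u := v - x; set s := dotv u u.
have s0 : s != 0 by rewrite dotv_eq0 subr_eq0 eq_sym.
set c := 2 / s; have cs : c * s = 2 by rewrite /c mulfVK.
pose W := 1%:M - c *: (u *m u^T).
have WE p (Y : 'M[R]_(d, p)) : W *m Y = Y - c *: (u *m (u^T *m Y)).
  by rewrite /W mulmxBl mul1mx -scalemxAl mulmxA.
have WT : W^T = W by rewrite /W linearB /= trmx1 linearZ /= trmx_mul trmxK.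
have uv : dotv u v = s / 2.
  by rewrite /s /u !dotvBl !dotvBr hx hv (dotvC v x); lra.
exists W; split.
  rewrite /orthogonal_mx WT WE.
  have -> : u^T *m W = - u^T.
    rewrite -[u^T *m W]trmxK trmx_mul WT WE trmxK trmx_mulmxE.
    rewrite mul_mx_scalar scalerA -/s cs.
    by rewrite scaler_nat mulr2n opprD addrA subrr add0r linearN.
  by rewrite mulmxN scalerN opprK /W subrK.
rewrite WE trmx_mulmxE mul_mx_scalar scalerA uv.
have -> : c * (s / 2) = 1 by rewrite mulrA cs divff.
by rewrite scale1r /u opprB addrC subrK.
Qed.

End euclid.

Section product_probability.
Variable R : realType.
Local Open Scope ereal_scope.

Lemma ae_of_full_measure d' (T : measurableType d') (m : probability T R)
    (G : set T) (Q : T -> Prop) :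
  measurable G -> m G = 1 -> (forall x, G x -> Q x) -> {ae m, forall x, Q x}.
Proof.
move=> mG mG1 GQ; exists (~` G); split; first exact: measurableC.
  by rewrite probability_setC // mG1 subee.
by move=> x /= nQx Gx; exact: nQx (GQ x Gx).
Qed.

Lemma integral_ae_cst d' (T : measurableType d') (m : probability T R)
    (G : set T) (f : T -> \bar R) (c : R) :
  measurable G -> m G = 1 -> measurable_fun setT f ->
  (forall x, G x -> f x = c%:E) -> \int[m]_x f x = c%:E.
Proof.
move=> mG mG1 mf fc; rewrite (ae_eq_integral (cst c%:E)) //.
  by rewrite integral_cst //; have /= -> := probability_setT m; rewrite mule1.
exact: ae_of_full_measure mG mG1 (fun x Gx _ => fc x Gx).
Qed.

Lemma sections_cst_eq d1 d2 (T1 : measurableType d1) (T2 : measurableType d2)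
    (m1 : probability T1 R) (m2 : probability T2 R) (E : set (T1 * T2))
    (G1 : set T1) (G2 : set T2) (a b : \bar R) :
  measurable E -> measurable G1 -> m1 G1 = 1 -> measurable G2 -> m2 G2 = 1 ->
  a \is a fin_num -> b \is a fin_num ->
  (forall x, G1 x -> m2 (xsection E x) = a) ->
  (forall y, G2 y -> m1 (ysection E y) = b) -> a = b.
Proof.
move=> mE mG1 m1G1 mG2 m2G2 fa fb Ea Eb.
have := indic_fubini_tonelli m1 m2 mE.
rewrite indic_fubini_tonelli_FE // indic_fubini_tonelli_GE //.
rewrite (integral_ae_cst (c := fine a) mG1 m1G1); last 2 first.
- exact: measurable_fun_xsection.
- by move=> x Gx /=; rewrite Ea // fineK.
rewrite (integral_ae_cst (c := fine b) mG2 m2G2); last 2 first.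
- exact: measurable_fun_ysection.
- by move=> y Gy /=; rewrite Eb // fineK.
by move=> [ab]; rewrite -(fineK fa) -(fineK fb) ab.
Qed.

End product_probability.

Section haar.
Variables (R : realType) (d : nat).
Local Notation MxB := (MxBorel R d).
Local Notation VB := (VecBorel R d).
Variable P : probability MxB R.
Hypothesis hP : is_Haar_On P.

Definition Orth : set MxB := [set M | orthogonal_mx M].

Lemma measurable_Orth : measurable Orth.
Proof.
have -> : Orth = (fun M : MxB => (M^T *m M : MxB)) @^-1` [set 1%:M] by [].
rewrite -[X in measurable X]setTI.
apply: (measurable_mulmx (measurable_trmx (@measurable_id _ MxB setT))
  (@measurable_id _ MxB setT)) => //.
exact: measurable_mx_set1.
Qed.

Lemma Haar_Orth : P Orth = 1%E.
Proof. exact: proj1 hP. Qed.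

Lemma Haar_mulmxl U (B : set MxB) : orthogonal_mx U -> measurable B ->
  P [set M : MxB | B (U *m M)] = P B.
Proof. move=> oU mB; exact: (proj2 hP U oU B mB). Qed.

(* Fubini on [[set (S, T) | B (S^T *m T)]]: each section is a left translate. *)
Lemma Haar_trmx (B : set MxB) : measurable B -> P [set S : MxB | B S^T] = P B.
Proof.
move=> mB; pose E := [set p : MxB * MxB | B (p.1^T *m p.2)].
have mE : measurable E.
  by rewrite -[E]setTI; exact: (measurable_mulmx (measurable_trmx measurable_fst) measurable_snd).
apply: esym; apply: (sections_cst_eq mE measurable_Orth Haar_Orth measurable_Orth Haar_Orth).
- exact: fin_num_measure.
- exact: fin_num_measure (measurable_trmx_preimage mB).
- move=> S oS; rewrite -(Haar_mulmxl (orthogonal_trmx oS) mB).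
  by congr (P _); apply/seteqP; split => T; rewrite /xsection /= inE.
- move=> T oT; rewrite -(Haar_mulmxl (orthogonal_trmx oT) (measurable_trmx_preimage mB)).
  by congr (P _); apply/seteqP; split => S; rewrite /ysection /= inE trmx_mul trmxK.
Qed.

Lemma Haar_mulmxr W (B : set MxB) : orthogonal_mx W -> measurable B ->
  P [set T : MxB | B (T *m W)] = P B.
Proof.
move=> oW mB; rewrite -[LHS]Haar_trmx; last exact: measurable_mulmxr.
rewrite -[RHS]Haar_trmx // -(Haar_mulmxl (orthogonal_trmx oW) (measurable_trmx_preimage mB)).
by congr (P _); apply/seteqP; split => T /=; rewrite trmx_mul trmxK.
Qed.

Lemma Haar_mulmx_sphere (A : set VB) x v : measurable A -> sphere x -> sphere v ->
  P [set T : MxB | A (T *m x)] = P [set T : MxB | A (T *m v)].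
Proof.
move=> mA sx sv; have [W [oW <-]] := sphere_orthogonal_transitive sx sv.
rewrite -(Haar_mulmxr oW (measurable_mulmxr v mA)).
by congr (P _); apply/seteqP; split => T /=; rewrite mulmxA.
Qed.

Lemma measurable_sphere : measurable (@sphere R d : set VB).
Proof.
have -> : (@sphere R d : set VB) = (fun u : VB => dotv u u) @^-1` [set 1%R].
  by apply/seteqP; split => u /=; rewrite sphereE.
have mdot : measurable_fun setT (fun u : VB => dotv u u).
  by apply: measurable_sum => i; apply: measurable_funM; exact: measurable_mx_coord.
by rewrite -[X in measurable X]setTI; exact: mdot.
Qed.

Variable pi : probability VB R.
Hypothesis hpi : is_uniform_sphere pi.

(* Fubini on [[set (T, x) | A (T *m x)]] under [P \x pi]. *)
Lemma Haar_mulmx_vec (A : set VB) v : measurable A -> sphere v ->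
  P [set T : MxB | A (T *m v)] = pi A.
Proof.
move=> mA sv; pose E := [set p : MxB * VB | A (p.1 *m p.2)].
have mE : measurable E.
  by rewrite -[E]setTI; exact: (measurable_mulmx measurable_fst measurable_snd).
apply: esym; apply: (sections_cst_eq mE measurable_Orth Haar_Orth measurable_sphere (proj1 hpi)).
- exact: fin_num_measure.
- exact: fin_num_measure (measurable_mulmxr v mA).
- move=> T oT; rewrite -((proj2 hpi) _ oT _ mA).
  by congr (pi _); apply/seteqP; split => x; rewrite /xsection /= inE.
- move=> x sx; rewrite -(Haar_mulmx_sphere mA sx sv).
  by congr (P _); apply/seteqP; split => T; rewrite /ysection /= inE.
Qed.

End haar.

Lemma count_le1_uniq (T : eqType) (s : seq T) (p : pred T) : uniq s ->
  {in s &, forall x y, p x -> p y -> x = y} -> (count p s <= 1)%N.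
Proof.
move=> us hp; have [/hasP[x xs px]|] := boolP (has p s); last first.
  by rewrite has_count -leqNgt => /leq_trans->.
rewrite (@eq_in_count _ _ (pred1 x)) ?count_uniq_mem ?leq_b1 // => y ys /=.
by apply/idP/eqP => [py|->//]; exact: hp.
Qed.

Section region_counting.
Variables (R : realType) (d : nat).
Implicit Types (B : set 'cV[R]_d) (V : seq 'cV[R]_d).

Lemma enorm_le_Diam B x y : B `<=` @sphere R d -> B x -> B y -> enorm (x - y) <= Diam B.
Proof.
move=> Bs Bx By; apply: sup_upper_bound; last by exists x, y.
split; first by exists (enorm (x - y)), x, y.
by exists 2 => _ [u [w [Bu [Bw ->]]]]; apply: enorm_sphereB_le; apply: Bs.
Qed.

Lemma dmin_le V v w : v \in V -> w \in V -> v != w -> dmin V <= enorm (v - w).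
Proof.
move=> vV wV vw; apply: ge_inf; last by exists v, w.
by exists 0 => _ [a [b [_ [_ [_ ->]]]]]; rewrite enormE sqrtr_ge0.
Qed.

Lemma count_mulmx_in_le1 V B T : uniq V -> orthogonal_mx T -> B `<=` @sphere R d ->
  Diam B < dmin V -> (count [pred v | T *m v \in B] V <= 1)%N.
Proof.
move=> uV oT Bs BV; apply: count_le1_uniq => // v w vV wV /= /set_mem Bv /set_mem Bw.
apply/eqP; apply: contraLR BV => /(dmin_le vV wV) vw; rewrite -leNgt.
by apply: le_trans vw _; rewrite -(orthogonal_enorm _ oT) mulmxBr enorm_le_Diam.
Qed.

Lemma sum_indic_mulmx_le V (A : set 'cV[R]_d) N (Ai : 'I_N -> set 'cV[R]_d) T :
  uniq V -> orthogonal_mx T -> A `<=` \bigcup_(i in setT) Ai i ->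
  (forall i, Ai i `<=` @sphere R d) -> (forall i, Diam (Ai i) < dmin V) ->
  \sum_(v <- V) \1_A (T *m v) <= N%:R :> R.
Proof.
move=> uV oT AU Ais AiV.
apply: (@le_trans _ _ (\sum_(i < N) \sum_(v <- V) \1_(Ai i) (T *m v))).
  rewrite exchange_big /=; apply: ler_sum => v _.
  rewrite indicE; case: (boolP (T *m v \in A)) => [/set_mem/AU[i _ Aiv]|_].
    by rewrite (bigD1 i) //= indicE mem_set //= lerDl sumr_ge0.
  by rewrite sumr_ge0.
rewrite -[N in N%:R]card_ord -sumr_const; apply: ler_sum => i _.
have -> : \sum_(v <- V) \1_(Ai i) (T *m v) = (count [pred v | T *m v \in Ai i] V)%:R :> R.
  rewrite -sum1_count (big_morph _ (@natrD R) (mulr0n 1)) [RHS]big_mkcond.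
  by apply: eq_bigr => v _; rewrite indicE /=; case: (_ \in _).
by rewrite -[1 in leRHS]/(1%:R) ler_nat count_mulmx_in_le1.
Qed.

End region_counting.

Section variance_bound.
Variables (R : realType) (d' : measure_display) (T : measurableType d').
Variable P : probability T R.

Lemma bounded_Lfun1 (f : T -> R) (k : R) :
  measurable_fun setT f -> (forall x, `|f x| <= k) -> f \in Lfun P 1.
Proof.
move=> mf fk; apply/Lfun1_integrable.
apply: (le_integrable measurableT (g := EFin \o cst k)).
- exact/measurable_EFinP.
- move=> x _ /=; rewrite lee_fin (le_trans (fk x)) //.
  by rewrite ger0_norm // (le_trans _ (fk x)).
- exact: finite_measure_integrable_cst.
Qed.

Lemma variance_le_of_sqr_le (g : T -> R) (c : R) :
  measurable_fun setT g -> (forall x, 0 <= g x <= 1) -> 0 <= c ->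
  {ae P, forall x, g x ^+ 2 <= c * g x} ->
  ('V_P[g] <= (c * fine 'E_P[g] - fine 'E_P[g] ^+ 2)%:E)%E.
Proof.
move=> mg g01 c0 gc.
have g_ge0 x : 0 <= g x by case/andP: (g01 x).
have Lg : g \in Lfun P 1.
  by apply: (bounded_Lfun1 (k := 1)) => // x; rewrite ger0_norm //; case/andP: (g01 x).
have Lgg : (g * g)%R \in Lfun P 1.
  apply: (bounded_Lfun1 (k := 1)) => [|x]; first exact: measurable_funM.
  by rewrite normrM ger0_norm //; case/andP: (g01 x) => g0 g1; rewrite mulr_ile1.
have Egg : ('E_P[(g * g)%R] <= (c * fine 'E_P[g])%:E)%E.
  rewrite EFinM fineK ?expectation_fin_num // -expectationZl //.
  apply: expectation_le => //; first exact: measurable_funM.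
  - exact: measurable_funM.
  - by move=> x; rewrite mulr_ge0.
  - by move=> x; rewrite /= mulr_ge0.
  - by apply: filterS gc => x /=; rewrite expr2 [g x * c]mulrC.
rewrite /variance (covarianceE Lg Lg Lgg) -(fineK (expectation_fin_num Lg)).
rewrite -(fineK (expectation_fin_num Lgg)) -!EFinM -EFinB lee_fin expr2 lerD2r.
by rewrite -lee_fin (fineK (expectation_fin_num Lgg)).
Qed.

End variance_bound.

Section gVA_properties.
Variables (R : realType) (d : nat) (V : seq 'cV[R]_d) (A : set (VecBorel R d)).

Lemma gVA_ge0 T : 0 <= gVA V A T.
Proof. by rewrite mulr_ge0 ?invr_ge0 // sumr_ge0 // => v _; rewrite indicE. Qed.

Lemma sum_indic_le_size T : \sum_(v <- V) \1_A (T *m v) <= (size V)%:R :> R.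
Proof.
rewrite -sum1_size (big_morph _ (@natrD R) (mulr0n 1)).
by apply: ler_sum => v _; rewrite indicE lern1 leq_b1.
Qed.

Lemma gVA_le1 T : gVA V A T <= 1.
Proof.
have [V0|V0] := eqVneq (size V) 0%N.
  by rewrite /gVA V0 invr0 mul0r.
rewrite /gVA ler_pdivrMl ?ltr0n ?lt0n // mulr1; exact: sum_indic_le_size.
Qed.

Lemma measurable_gVA : measurable A -> measurable_fun setT (gVA V A).
Proof.
move=> mA; have mS : measurable_fun setT
    (fun T : MxBorel R d => \sum_(v <- V) \1_A (T *m v) : R).
  by apply: measurable_sum => v; exact: measurable_indic (measurable_mulmxr v mA).
exact: measurable_funM (measurable_cst _) mS.
Qed.

Lemma gVA_sqr_le N (Ai : 'I_N -> set 'cV[R]_d) T :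
  uniq V -> orthogonal_mx T -> A `<=` \bigcup_(i in setT) Ai i ->
  (forall i, Ai i `<=` @sphere R d) -> (forall i, Diam (Ai i) < dmin V) ->
  gVA V A T ^+ 2 <= N%:R / (size V)%:R * gVA V A T.
Proof.
move=> uV oT AU Ais AiV; rewrite expr2 ler_wpM2r ?gVA_ge0 // /gVA mulrC.
by rewrite ler_wpM2r ?invr_ge0 // (sum_indic_mulmx_le uV oT AU Ais AiV).
Qed.

End gVA_properties.

Section expectation_gVA.
Variables (R : realType) (d : nat).
Variables (P : probability (MxBorel R d) R) (pi : probability (VecBorel R d) R).
Hypotheses (hP : is_Haar_On P) (hpi : is_uniform_sphere pi).

Lemma expectation_gVA V (A : set (VecBorel R d)) : (0 < size V)%N ->
  (forall v, v \in V -> sphere v) -> measurable A -> ('E_P[gVA V A] = pi A)%E.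
Proof.
move=> V0 Vs mA; pose F v := \1_([set T : MxBorel R d | A (T *m v)]) : _ -> R.
have LF v : F v \in Lfun P 1.
  apply: (@bounded_Lfun1 _ _ _ _ _ 1); first exact: measurable_indic (measurable_mulmxr v mA).
  by move=> T; rewrite /F indicE; case: (_ \in _); rewrite ?normr1 ?normr0.
have -> : gVA V A = (size V)%:R^-1 \o* \sum_(v <- V) F v.
  by apply/funext => T; rewrite /gVA fct_sumE /= mulrC.
rewrite expectationZl; last exact: rpred_sum.
have -> : \sum_(v <- V) F v = \sum_(f <- map F V) f by rewrite big_map.
rewrite expectation_sum; last by move=> _ /mapP[v _ ->].
have pE : pi A = (fine (pi A))%:E by rewrite fineK ?fin_num_measure.
rewrite big_map big_seq (eq_bigr (fun=> (fine (pi A))%:E)); last first.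
  move=> v vV; rewrite expectation_indic -?pE; last exact: measurable_mulmxr.
  exact: (Haar_mulmx_vec hP hpi mA (Vs v vV)).
rewrite -big_seq sumEFin -EFinM [RHS]pE; congr EFin.
rewrite big_const_seq count_predT iter_addr addr0 -[fine _ *+ _]mulr_natl mulKf //.
by rewrite pnatr_eq0 -lt0n.
Qed.

End expectation_gVA.

Theorem theorem1 (R : realType) (d : nat) (hd : (2 <= d)%N)
  (V : seq 'cV[R]_d) (hVuniq : uniq V) (hVsize : (2 <= size V)%N)
  (hVsph : forall v, v \in V -> @sphere R d v)
  (P : probability (MxBorel R d) R) (hP : is_Haar_On P)
  (pi : probability (VecBorel R d) R) (hpi : is_uniform_sphere pi)
  (A : set (VecBorel R d)) (hAm : measurable A) (hAs : A `<=` @sphere R d)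
  (N : nat) (Ai : 'I_N -> set (VecBorel R d))
  (hAim : forall i, measurable (Ai i))
  (hAU : A = \bigcup_(i in setT) Ai i)
  (hAdisj : trivIset setT Ai)
  (hdiam : forall i, Diam (Ai i) < dmin V) :
  ('V_P[gVA V A] <=
    (fine (pi A) - fine (pi A) ^+ 2
     + ((N%:R / (size V)%:R) - 1) * fine (pi A))%:E)%E.
Proof.
have V0 : (0 < size V)%N by apply: leq_trans hVsize.
have Ais i : Ai i `<=` @sphere R d by move=> x Aix; apply: hAs; rewrite hAU; exists i.
have AU : A `<=` \bigcup_(i in setT) Ai i by rewrite hAU.
have gVA01 T : 0 <= gVA V A T <= 1 by rewrite gVA_ge0 gVA_le1.
have gVA_sqr : {ae P, forall T, gVA V A T ^+ 2 <= N%:R / (size V)%:R * gVA V A T}.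
  exact: ae_of_full_measure (@measurable_Orth R d) (Haar_Orth hP)
    (fun T oT => gVA_sqr_le hVuniq oT AU Ais hdiam).
have c0 : 0 <= N%:R / (size V)%:R :> R by rewrite divr_ge0.
apply: le_trans (variance_le_of_sqr_le (measurable_gVA V hAm) gVA01 c0 gVA_sqr) _.
rewrite (expectation_gVA hP hpi V0 hVsph hAm) lee_fin le_eqVlt.
by apply/orP; left; apply/eqP; ring.
Qed.
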